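(* A quasi-Brownian isometry $T\in\mathcal B(\mathcal H)$ satisfies the kernel condition $T^*T(\ker T^* )\subseteq\ker T^*$ if and only if $T$ is an isometry.
   Context: A $2$-isometry is $T$ with $I-2T^*T+T^{*2}T^2=0$. A quasi-Brownian isometry is a $2$-isometry with $\Delta_TT=\Delta_T^{1/2}T\Delta_T^{1/2}$ where $\Delta_T=T^*T-I$. *)

From Stdlib Require Import Reals.
Open Scope R_scope.

Record Cplx := mkC { re : R ; im : R }.
Definition C0 : Cplx := mkC 0 0.
Definition C1 : Cplx := mkC 1 0.
Definition RtoC (r : R) : Cplx := mkC r 0.
Definition Cadd (a b : Cplx) : Cplx := mkC (re a + re b) (im a + im b).
Definition Cmul (a b : Cplx) : Cplx :=
  mkC (re a * re b - im a * im b) (re a * im b + im a * re b).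
Definition Cconj (a : Cplx) : Cplx := mkC (re a) (- im a).

Record HilbertSpace := {
  carrier :> Type;
  vadd : carrier -> carrier -> carrier;
  vzero : carrier;
  vopp : carrier -> carrier;
  vscal : Cplx -> carrier -> carrier;
  inner : carrier -> carrier -> Cplx;
  vaddA : forall x y z, vadd x (vadd y z) = vadd (vadd x y) z;
  vaddC : forall x y, vadd x y = vadd y x;
  vadd0 : forall x, vadd x vzero = x;
  vaddN : forall x, vadd x (vopp x) = vzero;
  vscalA : forall a b x, vscal a (vscal b x) = vscal (Cmul a b) x;
  vscal1 : forall x, vscal C1 x = x;
  vscalDr : forall a x y, vscal a (vadd x y) = vadd (vscal a x) (vscal a y);
  vscalDl : forall a b x, vscal (Cadd a b) x = vadd (vscal a x) (vscal b x);
  (* inner product axioms (linear in the first argument) *)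
  inner_conj : forall x y, inner y x = Cconj (inner x y);
  inner_addl : forall x y z, inner (vadd x y) z = Cadd (inner x z) (inner y z);
  inner_scall : forall a x y, inner (vscal a x) y = Cmul a (inner x y);
  inner_pos : forall x, im (inner x x) = 0 /\ 0 <= re (inner x x);
  inner_def : forall x, inner x x = C0 -> x = vzero;
  complete : forall u : nat -> carrier,
    (forall eps, 0 < eps -> exists N, forall m n, (N <= m)%nat -> (N <= n)%nat ->
        sqrt (re (inner (vadd (u m) (vopp (u n))) (vadd (u m) (vopp (u n))))) < eps) ->
    exists l, forall eps, 0 < eps -> exists N, forall n, (N <= n)%nat ->
        sqrt (re (inner (vadd (u n) (vopp l)) (vadd (u n) (vopp l)))) < eps
}.

Arguments vadd {h}. Arguments vzero {h}. Arguments vopp {h}.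
Arguments vscal {h}. Arguments inner {h}.

Definition vsub {H : HilbertSpace} (x y : H) : H := vadd x (vopp y).
Definition hnorm {H : HilbertSpace} (x : H) : R := sqrt (re (inner x x)).

Definition linear_op {H : HilbertSpace} (T : H -> H) : Prop :=
  (forall x y, T (vadd x y) = vadd (T x) (T y)) /\
  (forall a x, T (vscal a x) = vscal a (T x)).

Definition bounded_op {H : HilbertSpace} (T : H -> H) : Prop :=
  linear_op T /\ exists M : R, forall x, hnorm (T x) <= M * hnorm x.

Definition is_adjoint {H : HilbertSpace} (Ts T : H -> H) : Prop :=
  forall x y, inner (T x) y = inner x (Ts y).

Definition positive_op {H : HilbertSpace} (S : H -> H) : Prop :=
  bounded_op S /\ forall x, im (inner (S x) x) = 0 /\ 0 <= re (inner (S x) x).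

Definition DeltaOp {H : HilbertSpace} (Ts T : H -> H) (x : H) : H :=
  vsub (Ts (T x)) x.

Definition two_isometry {H : HilbertSpace} (Ts T : H -> H) : Prop :=
  forall x, vadd (vsub x (vscal (RtoC 2) (Ts (T x)))) (Ts (Ts (T (T x)))) = vzero.

(* quasi-Brownian isometry: 2-isometry with Delta T = Delta^{1/2} T Delta^{1/2},
   where Sq is the positive square root of Delta *)
Definition quasi_Brownian {H : HilbertSpace} (Ts T Sq : H -> H) : Prop :=
  two_isometry Ts T /\ forall x, DeltaOp Ts T (T x) = Sq (T (Sq x)).

Definition kernel_condition {H : HilbertSpace} (Ts T : H -> H) : Prop :=
  forall x, Ts x = vzero -> Ts (Ts (T x)) = vzero.

Definition isometry {H : HilbertSpace} (Ts T : H -> H) : Prop :=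
  forall x, Ts (T x) = x.

From Stdlib Require Import Reals Lra.
Open Scope R_scope.

(* Write Δ = T*T - I.  The 2-isometry identity says T*ΔT = Δ, and the
   quasi-Brownian identity ΔT = Δ^{1/2} T Δ^{1/2} upgrades this to T*Δ²T = Δ².
   For any w, the vector x = TΔw - ΔTw - ΔTΔw lies in ker T*, and the kernel
   condition T*T*Tx = 0 then reads -Δ³w = 0.  Since Δ is self-adjoint, Δ³ = 0
   forces Δ = 0, i.e. T is an isometry. *)

Definition Copp (a : Cplx) : Cplx := mkC (- re a) (- im a).

Lemma Cplx_ext (a b : Cplx) : re a = re b -> im a = im b -> a = b.
Proof. destruct a, b; simpl; intros; subst; reflexivity. Qed.

Ltac cplx_simpl := cbn [re im Cadd Copp Cmul Cconj C0 C1 RtoC] in *.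
Ltac cplx_parts h :=
  pose proof (f_equal re h); pose proof (f_equal im h); cplx_simpl.

Section InnerProduct.

Variable H : HilbertSpace.
Implicit Types x y z : H.

Lemma inner0l y : inner vzero y = C0.
Proof.
  pose proof (inner_addl H vzero vzero y) as E. rewrite vadd0 in E.
  cplx_parts E. apply Cplx_ext; cplx_simpl; lra.
Qed.

Lemma innerNl x y : inner (vopp x) y = Copp (inner x y).
Proof.
  pose proof (inner_addl H x (vopp x) y) as E. rewrite vaddN, inner0l in E.
  cplx_parts E. apply Cplx_ext; cplx_simpl; lra.
Qed.

Lemma inner_addr x y z : inner x (vadd y z) = Cadd (inner x y) (inner x z).
Proof.
  rewrite (inner_conj H (vadd y z) x), (inner_conj H y x), (inner_conj H z x),
    inner_addl.
  apply Cplx_ext; cplx_simpl; lra.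
Qed.

Lemma innerNr x y : inner x (vopp y) = Copp (inner x y).
Proof.
  rewrite (inner_conj H (vopp y) x), (inner_conj H y x), innerNl.
  apply Cplx_ext; cplx_simpl; lra.
Qed.

Lemma inner0r x : inner x vzero = C0.
Proof. rewrite (inner_conj H vzero x), inner0l. apply Cplx_ext; cplx_simpl; lra. Qed.

Lemma inner_scalr a x y : inner x (vscal a y) = Cmul (Cconj a) (inner x y).
Proof.
  rewrite (inner_conj H (vscal a y) x), (inner_conj H y x), inner_scall.
  apply Cplx_ext; cplx_simpl; lra.
Qed.

Lemma vector_ext x y : (forall z, inner x z = inner y z) -> x = y.
Proof.
  intro E.
  assert (Z : inner (vsub x y) (vsub x y) = C0).
  { unfold vsub. rewrite inner_addl, innerNl, E. apply Cplx_ext; cplx_simpl; lra. }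
  apply inner_def in Z. unfold vsub in Z.
  rewrite <- (vadd0 H x), <- (vaddN H y), (vaddC H y), vaddA, Z, vaddC, vadd0.
  reflexivity.
Qed.

End InnerProduct.

(* Vector identities are checked by pairing both sides with an arbitrary
   vector, which turns them into real linear arithmetic. *)
Ltac inner_expand :=
  unfold vsub in *;
  repeat progress rewrite ?inner_addl, ?innerNl, ?inner0l, ?inner_scall,
    ?inner_addr, ?innerNr, ?inner0r, ?inner_scalr.
Ltac inner_expand_in h :=
  unfold vsub in *;
  repeat progress rewrite ?inner_addl, ?innerNl, ?inner0l, ?inner_scall,
    ?inner_addr, ?innerNr, ?inner0r, ?inner_scalr in h.
Ltac vector_identity :=
  apply vector_ext; intro; inner_expand; apply Cplx_ext; cplx_simpl; lra.

Section Operators.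

Variable H : HilbertSpace.

Lemma additive_opp (f : H -> H) :
  (forall a b, f (vadd a b) = vadd (f a) (f b)) ->
  forall a, f (vopp a) = vopp (f a).
Proof.
  intros fadd a.
  assert (f0 : f vzero = vzero).
  { pose proof (fadd vzero vzero) as E. rewrite vadd0 in E.
    apply vector_ext; intro y. apply (f_equal (fun z => inner z y)) in E.
    inner_expand_in E. cplx_parts E. inner_expand. apply Cplx_ext; cplx_simpl; lra. }
  pose proof (fadd a (vopp a)) as E. rewrite vaddN, f0 in E.
  apply vector_ext; intro y. apply (f_equal (fun z => inner z y)) in E.
  inner_expand_in E. cplx_parts E. inner_expand. apply Cplx_ext; cplx_simpl; lra.
Qed.

Lemma adjoint_inner_l (T Ts : H -> H) :
  is_adjoint Ts T -> forall a u, inner (Ts a) u = inner a (T u).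
Proof.
  intros adj a u.
  rewrite (inner_conj H u (Ts a)), <- adj, (inner_conj H (T u) a). reflexivity.
Qed.

(* Polarization: <Sz, z> real for z = x + y and z = x + iy. *)
Lemma real_form_selfadjoint (S : H -> H) :
  linear_op S -> (forall z, im (inner (S z) z) = 0) ->
  forall x y, inner (S x) y = inner x (S y).
Proof.
  intros [Sadd Sscal] Sreal x y.
  pose proof (Sreal x) as p1. pose proof (Sreal y) as p2.
  pose proof (Sreal (vadd x y)) as p3.
  pose proof (Sreal (vadd x (vscal (mkC 0 1) y))) as p4.
  rewrite Sadd in p3, p4. rewrite Sscal in p4.
  inner_expand_in p3. inner_expand_in p4. cplx_simpl.
  rewrite (inner_conj H (S y) x). apply Cplx_ext; cplx_simpl; lra.
Qed.

Lemma selfadjoint_sq_eq0 (D : H -> H) :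
  (forall a b, inner (D a) b = inner a (D b)) ->
  forall w, D (D w) = vzero -> D w = vzero.
Proof.
  intros Dself w DD. apply inner_def. rewrite Dself, DD, inner0r. reflexivity.
Qed.

End Operators.

Section QuasiBrownian.

Variables (H : HilbertSpace) (T Ts Sq : H -> H).
Hypothesis Tadd : forall a b, T (vadd a b) = vadd (T a) (T b).
Hypothesis Tsadd : forall a b, Ts (vadd a b) = vadd (Ts a) (Ts b).
Hypothesis adj : is_adjoint Ts T.

Local Notation Delta := (DeltaOp Ts T).

Lemma Tsopp a : Ts (vopp a) = vopp (Ts a).
Proof. exact (additive_opp H Ts Tsadd a). Qed.

Lemma DeltaD a b : Delta (vadd a b) = vadd (Delta a) (Delta b).
Proof. unfold DeltaOp. rewrite Tadd, Tsadd. vector_identity. Qed.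

Lemma DeltaN a : Delta (vopp a) = vopp (Delta a).
Proof. exact (additive_opp H Delta DeltaD a). Qed.

Lemma adjT_T_Delta v : Ts (T v) = vadd (Delta v) v.
Proof. unfold DeltaOp. vector_identity. Qed.

Lemma Delta_selfadjoint a b : inner (Delta a) b = inner a (Delta b).
Proof.
  pose proof (adjoint_inner_l H T Ts adj (T a) b) as e1.
  rewrite adjT_T_Delta, inner_addl in e1.
  pose proof (eq_sym (adj a (T b))) as e2. rewrite adjT_T_Delta, inner_addr in e2.
  cplx_parts e1. cplx_parts e2. apply Cplx_ext; lra.
Qed.

Lemma two_isometry_adjT_Delta_T :
  two_isometry Ts T -> forall v, Ts (Delta (T v)) = Delta v.
Proof.
  intros two v. unfold DeltaOp, vsub. rewrite Tsadd, Tsopp.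
  apply vector_ext; intro y. pose proof (f_equal (fun z => inner z y) (two v)) as E.
  cbv beta in E. inner_expand_in E. inner_expand. cplx_parts E.
  apply Cplx_ext; cplx_simpl; lra.
Qed.

Lemma quasi_Brownian_adjT_Delta_sq_T :
  positive_op Sq -> (forall x, Sq (Sq x) = Delta x) -> quasi_Brownian Ts T Sq ->
  forall v, Ts (Delta (Delta (T v))) = Delta (Delta v).
Proof.
  intros [[Slin _] Spos] SS [two QB] v.
  pose proof (real_form_selfadjoint H Sq Slin (fun z => proj1 (Spos z))) as Sself.
  pose proof (two_isometry_adjT_Delta_T two) as F.
  apply vector_ext; intro u.
  rewrite (adjoint_inner_l H T Ts adj), Delta_selfadjoint, !QB, Sself, SS, adj, F,
    <- (SS (Sq u)), <- Sself, !SS, <- Delta_selfadjoint.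
  reflexivity.
Qed.

Lemma kernel_condition_Delta_cube :
  (forall v, Ts (Delta (T v)) = Delta v) ->
  (forall v, Ts (Delta (Delta (T v))) = Delta (Delta v)) ->
  kernel_condition Ts T -> forall w, Delta (Delta (Delta w)) = vzero.
Proof.
  intros F K kern w.
  set (x := vadd (T (Delta w)) (vopp (vadd (Delta (T w)) (Delta (T (Delta w)))))).
  assert (x_ker : Ts x = vzero).
  { unfold x. rewrite Tsadd, Tsopp, Tsadd, adjT_T_Delta, !F. vector_identity. }
  pose proof (kern x x_ker) as X.
  rewrite adjT_T_Delta, Tsadd, x_ker, vadd0 in X.
  unfold x in X. rewrite DeltaD, DeltaN, DeltaD, Tsadd, Tsopp, Tsadd, !F, !K in X.
  apply vector_ext; intro y. apply (f_equal (fun z => inner z y)) in X.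
  inner_expand_in X. inner_expand. cplx_parts X. apply Cplx_ext; cplx_simpl; lra.
Qed.

Lemma kernel_condition_isometry :
  positive_op Sq -> (forall x, Sq (Sq x) = Delta x) -> quasi_Brownian Ts T Sq ->
  kernel_condition Ts T -> isometry Ts T.
Proof.
  intros Spos SS QB kern w.
  pose proof (two_isometry_adjT_Delta_T (proj1 QB)) as F.
  pose proof (quasi_Brownian_adjT_Delta_sq_T Spos SS QB) as K.
  pose proof (kernel_condition_Delta_cube F K kern) as Dcube.
  assert (Dw : Delta w = vzero).
  { apply (selfadjoint_sq_eq0 H Delta Delta_selfadjoint).
    apply (selfadjoint_sq_eq0 H Delta Delta_selfadjoint), Dcube. }
  rewrite adjT_T_Delta, Dw, vaddC, vadd0. reflexivity.
Qed.

End QuasiBrownian.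

Lemma isometry_kernel_condition (H : HilbertSpace) (T Ts : H -> H) :
  isometry Ts T -> kernel_condition Ts T.
Proof. intros iso x Hx. rewrite iso. exact Hx. Qed.

Theorem mainTheorem6 (H : HilbertSpace) (T Ts Sq : H -> H) :
  bounded_op T -> bounded_op Ts -> is_adjoint Ts T ->
  positive_op Sq -> (forall x, Sq (Sq x) = DeltaOp Ts T x) ->
  quasi_Brownian Ts T Sq ->
  (kernel_condition Ts T <-> isometry Ts T).
Proof.
  intros [[Tadd _] _] [[Tsadd _] _] adj Spos SS QB.
  split.
  - exact (kernel_condition_isometry H T Ts Sq Tadd Tsadd adj Spos SS QB).
  - exact (isometry_kernel_condition H T Ts).
Qed.
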